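(* Let $\Omega$ be a topological space and let $X$ be a locally convex topological vector space whose topology is given by a family $\mathfrak{A}$ of seminorms. Let $V \subset F(\Omega, \mathbb{R}_+)$, $A \subset C(\Omega, \mathbb{C})$, $W \subset F(\Omega, X)$ and $f \in F(\Omega, X)$. Assume $A$ is a multiplier of $W$ and that $f - g \in FV_{b}(\Omega, X)$ for every $g \in W$. Then for each $p \in \mathfrak{A}$ and $v \in V$ there is an $(A, v)$-antisymmetric $z$-filter $\mathcal{F}$ on $\Omega$ such that \[ \inf_{F \in \mathcal{F}} d_{v, p, F}(f, W) = d_{v, p, \Omega}(f, W). \] Moreover, $\mathcal{F}$ can be chosen maximal in the following sense: if $\mathcal{E}$ is a $z$-filter on $\Omega$ with $\mathcal{F} \subset \mathcal{E}$ and $\inf_{E \in \mathcal{E}} d_{v, p, E}(f, W) = d_{v, p, \Omega}(f, W)$, then $\mathcal{E} = \mathcal{F}$.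
   Context: Topological spaces are not assumed Hausdorff. $F(\Omega,X)$ denotes all functions $\Omega\to X$, $\mathbb{R}_+=[0,\infty)$. For $p\in\mathfrak{A}$, $v\in F(\Omega,\mathbb{R}_+)$, $f\in F(\Omega,X)$, $F\subset\Omega$: $|f|_{v,p,F}=\sup\{v(x)p(f(x)):x\in F\}$, and for $W\subset F(\Omega,X)$, $d_{v,p,F}(f,W)=\inf\{|f-g|_{v,p,F}:g\in W\}$. $FV_b(\Omega,X)=\{f\in F(\Omega,X): \sup_{x\in\Omega}v(x)p(f(x))<\infty \text{ for all } v\in V,\ p\in\mathfrak{A}\}$. A zero-set of $\Omega$ is a set $h^{-1}(0)$ with $h\in C(\Omega,\mathbb{R})$; $Z(\Omega)$ is the set of zero-sets. A $z$-filter on $\Omega$ is a nonempty $\mathcal{F}\subset Z(\Omega)$ with $\emptyset\notin\mathcal{F}$, closed under finite intersections, and such that $Z\in\mathcal{F}$, $Z'\in Z(\Omega)$, $Z\subset Z'$ imply $Z'\in\mathcal{F}$. For $v\in F(\Omega,\mathbb{R}_+)$, $\mathrm{supp}\, v$ is the closure of $\{x:v(x)\neq 0\}$. A $z$-filter $\mathcal{F}$ is $(A,v)$-antisymmetric if every $F\in\mathcal{F}$ meets $\mathrm{supp}\,v$ and, for each $\phi\in A$ with $\bigcap_{F\in\mathcal{F}}\overline{\phi(F\cap\mathrm{supp}\,v)}\subset[0,1]$ (closures taken in the one-point compactification $\mathbb{C}\cup\{\infty\}$), this intersection is a single point. A function $\varphi\in F(\Omega,\mathbb{C})$ is a multiplier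 of $W$ if $\varphi f+(1-\varphi)g\in W$ for all $f,g\in W$; $A$ is a multiplier of $W$ if each $\varphi\in A$ is. *)

From HB Require Import structures.
From mathcomp Require Import all_boot all_order all_algebra.
From mathcomp Require Import all_classical all_reals.
From mathcomp Require Import ereal topology normedtype one_point_compactification.
From mathcomp Require Import complex.

Set Implicit Arguments.
Unset Strict Implicit.
Unset Printing Implicit Defensive.

Import Order.TTheory GRing.Theory Num.Theory.
Import numFieldTopology.Exports numFieldNormedType.Exports.
Local Open Scope classical_set_scope.
Local Open Scope ring_scope.
Local Open Scope ereal_scope.
Local Open Scope ring_scope.
Local Open Scope complex_scope.

(** The complex numbers are [R[i]] for [R : realType]; their topology is
    the norm topology, obtained through the alias [(R[i])^o]. *)

Definition is_seminorm (R : realType) (X : lmodType R[i]) (p : X -> R) : Prop :=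
  (forall x y : X, p (x + y) <= p x + p y) /\
  (forall (a : R[i]) (x : X), (p (a *: x))%:C = `|a| * (p x)%:C).

Definition wsnorm (R : realType) (Omega : Type) (X : lmodType R[i])
  (v : Omega -> R) (p : X -> R) (F : set Omega) (h : Omega -> X) : \bar R :=
  ereal_sup ([set 0%E] `|` [set ((v x) * p (h x))%:E | x in F]).

Definition wdist (R : realType) (Omega : Type) (X : lmodType R[i])
  (v : Omega -> R) (p : X -> R) (F : set Omega) (f : Omega -> X)
  (W : set (Omega -> X)) : \bar R :=
  ereal_inf [set wsnorm v p F (fun x => f x - g x) | g in W].

Definition FVb (R : realType) (Omega : Type) (X : lmodType R[i])
  (V : set (Omega -> R)) (AA : set (X -> R)) : set (Omega -> X) :=
  [set h | forall v p, V v -> AA p ->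
     (ereal_sup [set ((v x) * p (h x))%:E | x in [set: Omega]] < +oo)%E].

Definition zero_sets (R : realType) (Omega : topologicalType) : set (set Omega) :=
  [set h @^-1` [set 0] | h in [set h : Omega -> R | continuous h]].

Definition is_zfilter (R : realType) (Omega : topologicalType)
  (FF : set (set Omega)) : Prop :=
  [/\ FF `<=` @zero_sets R Omega, FF !=set0, ~ FF set0,
      (forall Z1 Z2, FF Z1 -> FF Z2 -> FF (Z1 `&` Z2)) &
      (forall Z Z', FF Z -> @zero_sets R Omega Z' -> Z `<=` Z' -> FF Z')].

Definition supp (R : realType) (Omega : topologicalType) (v : Omega -> R) :
  set Omega := closure [set x | v x != 0].

Definition to_opc (R : realType) (z : R[i]) :
  one_point_compactification (R[i])^o := Some (z : (R[i])^o).

Definition continuousC (R : realType) (Omega : topologicalType)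
  (phi : Omega -> R[i]) : Prop := continuous (phi : Omega -> (R[i])^o).

Definition Av_antisymmetric (R : realType) (Omega : topologicalType)
  (A : set (Omega -> R[i])) (v : Omega -> R) (FF : set (set Omega)) : Prop :=
  (forall F, FF F -> F `&` supp v !=set0) /\
  (forall phi, A phi ->
     let I := \bigcap_(F in FF)
                closure (@to_opc R @` (phi @` (F `&` supp v))) in
     I `<=` [set @to_opc R (r%:C) | r in [set r : R | 0 <= r <= 1]] ->
     exists c, I = [set c]).

Definition is_multiplier (R : realType) (Omega : Type) (X : lmodType R[i])
  (W : set (Omega -> X)) (phi : Omega -> R[i]) : Prop :=
  forall f g, W f -> W g -> W (fun x => phi x *: f x + (1 - phi x) *: g x).

From HB Require Import structures.
From mathcomp Require Import all_boot all_order all_algebra.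
From mathcomp Require Import all_classical all_reals.
From mathcomp Require Import ereal topology normedtype one_point_compactification.
From mathcomp Require Import complex sequences.
From mathcomp Require Import ring lra.

Import Order.TTheory GRing.Theory Num.Theory.
Import numFieldTopology.Exports numFieldNormedType.Exports.
Local Open Scope classical_set_scope.
Local Open Scope ring_scope.
Local Open Scope complex_scope.

(** Zorn's lemma yields a z-filter FF, maximal among the z-filters all of whose
    members F satisfy d_F(f, W) = d(f, W).  Growing FF from the z-sets through a
    point where v does not vanish (if d(f, W) is 0 or +oo), or from {Omega}
    (otherwise), makes every member of FF meet supp v.  Suppose some phi in A had
    two real cluster values a < b along FF on supp v, and pick a < t1 < t2 < b.
    The zero-set {Re phi <= t2} meets every member of FF (a is a cluster value)
    but is not in FF (b is one), so by maximality some F in FF has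
    d_{F & {Re phi <= t2}}(f, W) < d(f, W); likewise for {t1 <= Re phi}.  This
    gives g1, g2 in W beating d(f, W) on these two parts of a common F.  As FF
    clusters in [0, 1], for large n and m the multiplier psi = (1 - phi^n)^m is
    nearly 1 where Re phi < t1 and nearly 0 where Re phi > t2, so
    psi g1 + (1 - psi) g2 lies in W and beats d(f, W) on a member of FF. *)

(** * Weighted seminorms and distances *)

Section WeightedSeminorm.
Context {R : realType} {Omega : Type} {X : lmodType R[i]}.
Variables (v : Omega -> R) (p : X -> R).
Implicit Types (F G : set Omega) (h g f : Omega -> X) (W : set (Omega -> X)).

Lemma wsnorm_ge0 F h : (0 <= wsnorm v p F h)%E.
Proof. by apply: ereal_sup_ubound; left. Qed.

Lemma le_wsnorm {F G} h : F `<=` G -> (wsnorm v p F h <= wsnorm v p G h)%E.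
Proof.
move=> FG; apply: ereal_sup_le => _ [->|[x Fx <-]]; first by left.
by right; exists x => //; apply: FG.
Qed.

Lemma wsnorm_ubound F h x : F x -> ((v x * p (h x))%:E <= wsnorm v p F h)%E.
Proof. by move=> Fx; apply: ereal_sup_ubound; right; exists x. Qed.

Lemma ge_wsnorm F h (s : R) : 0 <= s ->
  (forall x, F x -> v x * p (h x) <= s) -> (wsnorm v p F h <= s%:E)%E.
Proof.
move=> s0 hs; apply: ge_ereal_sup => _ [->|[x Fx <-]]; rewrite lee_fin //.
exact: hs.
Qed.

Lemma wdist_ge0 F f W : (0 <= wdist v p F f W)%E.
Proof. by apply: le_ereal_inf_tmp => _ [g _ <-]; apply: wsnorm_ge0. Qed.

Lemma le_wdist {F G} f W : F `<=` G -> (wdist v p F f W <= wdist v p G f W)%E.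
Proof.
move=> FG; apply: le_ereal_inf_tmp => _ [g Wg <-].
by apply: (le_trans _ (le_wsnorm _ FG)); apply: ereal_inf_lbound; exists g.
Qed.

Lemma wdist_le_wsnorm {F f W g} : W g ->
  (wdist v p F f W <= wsnorm v p F (fun x => (f x - g x)%R))%E.
Proof. by move=> Wg; apply: ereal_inf_lbound; exists g. Qed.

Lemma wdist_set0 F f : wdist v p F f set0 = +oo%E.
Proof. by apply/ereal_inf_pinfty => y [g]. Qed.

Lemma wdist_lt_witness {F f W} {s : R} : (wdist v p F f W < s%:E)%E ->
  exists g r, [/\ W g, 0 <= r < s & forall x, F x -> v x * p (f x - g x) <= r].
Proof.
move=> /ereal_inf_lt[_ [g Wg <-]].
have := wsnorm_ge0 F (fun x => (f x - g x)%R).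
case E : wsnorm => [r| |] // r0 rs; exists g, r; rewrite -lee_fin r0 -lte_fin rs.
by split=> // x Fx; rewrite -lee_fin -E; apply: wsnorm_ubound.
Qed.

End WeightedSeminorm.

(** * Zero-sets *)

Section ZeroSets.
Context {R : realType} {Omega : topologicalType}.
Local Notation Z := (@zero_sets R Omega).

Lemma zero_setsT : Z setT.
Proof. by exists (fun=> 0); [exact: cst_continuous|apply/seteqP; split]. Qed.

Lemma zero_sets_eq (k : Omega -> R) c : continuous k -> Z [set x | k x = c].
Proof.
move=> ck; exists (k - cst c).
  by move=> x; apply: continuousB; [exact: ck|exact: cst_continuous].
apply/seteqP; split => x /=; rewrite !fctE; last by move->; rewrite subrr.
by move/eqP; rewrite subr_eq0 => /eqP.
Qed.

Lemma zero_setsI Z1 Z2 : Z Z1 -> Z Z2 -> Z (Z1 `&` Z2).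
Proof.
move=> [h1 c1 <-] [h2 c2 <-]; exists ((Num.norm \o h1) + (Num.norm \o h2)).
  move=> x; apply: continuousD; apply: continuous_comp;
    [exact: c1|exact: norm_continuous|exact: c2|exact: norm_continuous].
apply/seteqP; split => x /=; rewrite !fctE /=; last by move=> [-> ->]; rewrite normr0 addr0.
by move/eqP; rewrite paddr_eq0 // !normr_eq0 => /andP[/eqP -> /eqP ->].
Qed.

Lemma zero_sets_le (k : Omega -> R) c : continuous k -> Z [set x | k x <= c].
Proof.
move=> ck; exists ((k - cst c) \max cst 0).
  apply: max_fun_continuous; last exact: cst_continuous.
  by move=> x; apply: continuousB; [exact: ck|exact: cst_continuous].
apply/seteqP; split => x /=; rewrite !fctE -subr_le0.
  by move=> <-; rewrite le_max lexx.
by move=> kc; rewrite max_r.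
Qed.

End ZeroSets.

(** * Step polynomials and multipliers *)

Definition step_poly {K : pzRingType} (n m : nat) (z : K) : K := (1 - z ^+ n) ^+ m.

Section Multipliers.
Context {R : realType} {Omega : Type} {X : lmodType R[i]}.
Variable W : set (Omega -> X).

Lemma multiplier1 : is_multiplier W (fun=> 1).
Proof.
move=> f g Wf Wg; suff -> : (fun x => 1 *: f x + (1 - 1) *: g x) = f by [].
by apply: funext => x; rewrite subrr scale0r addr0 scale1r.
Qed.

Lemma multiplierM (a b : Omega -> R[i]) : is_multiplier W a -> is_multiplier W b ->
  is_multiplier W (fun x => a x * b x).
Proof.
move=> Wa Wb f g Wf Wg; have := Wa _ _ (Wb _ _ Wf Wg) Wg.
congr W; apply: funext => x.
rewrite scalerDr !scalerA -addrA -scalerDl; congr (_ + _ *: _); ring.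
Qed.

Lemma multiplier1B (a : Omega -> R[i]) : is_multiplier W a ->
  is_multiplier W (fun x => 1 - a x).
Proof.
move=> Wa f g Wf Wg; have := Wa _ _ Wg Wf.
by congr W; apply: funext => x; rewrite addrC; congr (_ + _ *: _); ring.
Qed.

Lemma multiplierXn (a : Omega -> R[i]) n : is_multiplier W a ->
  is_multiplier W (fun x => a x ^+ n).
Proof.
move=> Wa; elim: n => [|n IHn]; first exact: multiplier1.
by under eq_fun do rewrite exprS; apply: multiplierM.
Qed.

Lemma multiplier_step_poly (a : Omega -> R[i]) n m : is_multiplier W a ->
  is_multiplier W (fun x => step_poly n m (a x)).
Proof. by move=> Wa; apply/multiplierXn/multiplier1B/multiplierXn. Qed.

End Multipliers.

Lemma bernoulli_inequality {R : realFieldType} (u : R) m :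
  -1 <= u -> 1 + m%:R * u <= (1 + u) ^+ m.
Proof.
move=> u1; elim: m => [|m IHm]; first by rewrite mul0r addr0 expr0.
have u0 : 0 <= 1 + u by lra.
have um : 0 <= m%:R * u ^+ 2 by rewrite mulr_ge0 ?sqr_ge0.
rewrite exprS; apply: le_trans (ler_wpM2l u0 IHm); rewrite -natr1; nra.
Qed.

Lemma normr_exprB_le {K : numDomainType} {a b c : K} k :
  `|a| <= c -> `|b| <= c -> `|a ^+ k.+1 - b ^+ k.+1| <= k.+1%:R * c ^+ k * `|a - b|.
Proof.
move=> ac bc; have c0 : 0 <= c := le_trans (normr_ge0 _) ac.
elim: k => [|k IHk]; first by rewrite expr0 mulr1 mul1r !expr1.
have -> : a ^+ k.+2 - b ^+ k.+2 = a * (a ^+ k.+1 - b ^+ k.+1) + (a - b) * b ^+ k.+1.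
  by rewrite !exprS; ring.
apply: (le_trans (ler_normD _ _)); rewrite !normrM normrX.
have bk : `|b| ^+ k.+1 <= c ^+ k.+1 by rewrite lerXn2r // nnegrE.
apply: le_trans (lerD (ler_pM _ _ ac IHk) (ler_wpM2l _ bk)) _ => //.
by rewrite -[k.+2]addn1 natrD exprS le_eqVlt; apply/orP; left; apply/eqP; ring.
Qed.

Lemma exists_exprn_lt {R : realType} {x y e1 e2 : R} :
  `|x| < 1 -> `|y| < 1 -> 0 < e1 -> 0 < e2 -> exists N, x ^+ N.+1 < e1 /\ y ^+ N.+1 < e2.
Proof.
move=> x1 y1 e10 e20.
have [N _ smallN] : \forall n \near \oo, x ^+ n < e1 /\ y ^+ n < e2.
  by near=> n; split; near: n; apply: (cvgr_lt _ (cvg_expr _)).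
by exists N; apply: smallN (leqnSn N).
Unshelve. all: by end_near.
Qed.

Section StepPoly.
Context {R : realType}.
Implicit Types (s t eta : R) (n m : nat).

Lemma step_poly_ge0_le1 n m {t} : 0 <= t <= 1 -> 0 <= step_poly n m t <= 1.
Proof.
move=> /andP[t0 t1]; have tn0 : 0 <= t ^+ n := exprn_ge0 n t0.
have tn1 : t ^+ n <= 1 := exprn_ile1 n t0 t1.
by rewrite exprn_ge0 ?exprn_ile1 //; lra.
Qed.

Lemma step_poly_lbound n m {s t} : 0 <= t <= s -> s <= 1 ->
  1 - m%:R * s ^+ n <= step_poly n m t.
Proof.
move=> /andP[t0 ts] s1; have s0 := le_trans t0 ts.
have sn1 : s ^+ n <= 1 := exprn_ile1 n s0 s1.
have tsn : t ^+ n <= s ^+ n by rewrite lerXn2r.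
have sn0 : 0 <= s ^+ n := exprn_ge0 n s0.
have := bernoulli_inequality (- s ^+ n) m; rewrite mulrN => /(_ _)/le_trans; apply.
  by rewrite lerN2.
by rewrite /step_poly; apply: lerXn2r; rewrite ?nnegrE /=; lra.
Qed.

Lemma step_poly_ubound n m {s t} : 0 <= s <= t -> t <= 1 ->
  step_poly n m t * (1 + m%:R * s ^+ n) <= 1.
Proof.
move=> /andP[s0 st] t1; have t0 := le_trans s0 st.
have w0 : 0 <= s ^+ n := exprn_ge0 n s0.
have w1 : s ^+ n <= 1 := exprn_ile1 n s0 (le_trans st t1).
have wt : s ^+ n <= t ^+ n by rewrite lerXn2r.
have tn1 : t ^+ n <= 1 := exprn_ile1 n t0 t1.
have qts : step_poly n m t <= (1 - s ^+ n) ^+ m.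
  by apply: lerXn2r; rewrite ?nnegrE /=; lra.
have bern : 1 + m%:R * s ^+ n <= (1 + s ^+ n) ^+ m by apply: bernoulli_inequality; lra.
apply: le_trans (ler_wpM2r _ qts) _; first by rewrite addr_ge0 ?mulr_ge0.
apply: le_trans (ler_wpM2l _ bern) _; first by apply: exprn_ge0; lra.
by rewrite -exprMn exprn_ile1 //; nra.
Qed.

Lemma step_poly_separates {s1 s2 eta} : 0 < s1 -> s1 < s2 -> s2 <= 1 -> 0 < eta ->
  exists n m,
    (forall t, 0 <= t <= s1 -> 1 - eta <= step_poly n.+1 m.+1 t) /\
    (forall t, s2 <= t <= 1 -> step_poly n.+1 m.+1 t <= eta).
Proof.
move=> s10 s12 s21 eta0; have s20 := lt_trans s10 s12.
have ratio1 : `|s1 / s2| < 1 by rewrite ger0_norm ?divr_ge0 ?ltW // ltr_pdivrMr // mul1r.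
have s1_1 : `|s1| < 1 by rewrite ger0_norm ?ltW // (lt_le_trans s12).
have eta2 : 0 < eta ^+ 2 / 2 by rewrite divr_gt0 // exprn_gt0.
have eta1 : 0 < eta / 2 by rewrite divr_gt0.
have [N [ratio_small s1_small]] := exists_exprn_lt ratio1 s1_1 eta2 eta1.
set a := s1 ^+ N.+1 in s1_small; set b := s2 ^+ N.+1.
have a0 : 0 <= a by rewrite exprn_ge0 // ltW.
have b0 : 0 < b by rewrite exprn_gt0.
have abE : (s1 / s2) ^+ N.+1 = a / b by rewrite exprMn exprVn.
have inv_ge0 : 0 <= 1 / (eta * b) by rewrite divr_ge0 // ltW // mulr_gt0.
pose m := Num.truncn (1 / (eta * b)).
have m_gt : 1 / (eta * b) < m.+1%:R by apply: truncnS_gt.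
have m_le : m.+1%:R <= 1 / (eta * b) + 1.
  by rewrite -natr1 lerD2r; case/andP: (truncn_itv inv_ge0).
exists N, m; split => t t01.
- have s11 : s1 <= 1 by apply/ltW/(lt_le_trans s12).
  apply: le_trans _ (step_poly_lbound N.+1 m.+1 t01 s11).
  have ma : m.+1%:R * a <= a / b / eta + a.
    have -> : a / b / eta + a = (1 / (eta * b) + 1) * a.
      by field; rewrite !gt_eqF.
    by apply: ler_wpM2r.
  suff : a / b / eta < eta / 2 by rewrite -/a; lra.
  by rewrite ltr_pdivrMr // -abE (lt_le_trans ratio_small) // expr2 -mulrA mulrC.
- have /andP[t0 t1] := t01; have bt : 0 <= s2 <= t by rewrite ltW // t0.
  have ub := step_poly_ubound N.+1 m.+1 bt t1.
  have /andP[q0 _] := step_poly_ge0_le1 N.+1 m.+1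
    (introT andP (conj (le_trans (ltW s20) t0) t1)).
  have mb : 1 <= eta * (m.+1%:R * b).
    by move: m_gt; rewrite ltr_pdivrMr ?mulr_gt0 // mulrCA mulrA => /ltW.
  set Y := m.+1%:R * b in ub mb; set q := step_poly _ _ t in ub q0 *.
  nra.
Qed.

End StepPoly.

Lemma step_poly_lipschitz {K : numDomainType} n m {a b c : K} :
  `|a| <= c -> `|b| <= c ->
  `|step_poly n.+1 m.+1 a - step_poly n.+1 m.+1 b|
    <= m.+1%:R * (1 + c ^+ n.+1) ^+ m * (n.+1%:R * c ^+ n) * `|a - b|.
Proof.
move=> ac bc; have c0 : 0 <= c := le_trans (normr_ge0 _) ac.
have step_le (z : K) : `|z| <= c -> `|1 - z ^+ n.+1| <= 1 + c ^+ n.+1.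
  move=> zc; apply: le_trans (ler_normB _ _) _; rewrite normr1 lerD2l normrX.
  by rewrite lerXn2r // nnegrE.
apply: le_trans (normr_exprB_le m (step_le _ ac) (step_le _ bc)) _.
have -> : 1 - a ^+ n.+1 - (1 - b ^+ n.+1) = - (a ^+ n.+1 - b ^+ n.+1) by ring.
rewrite normrN -[leRHS]mulrA; apply: ler_wpM2l; last exact: normr_exprB_le.
by rewrite mulr_ge0 ?exprn_ge0 ?addr_ge0 ?exprn_ge0.
Qed.

Lemma step_poly_real {R : realType} n m (t : R) :
  (step_poly n m t)%:C = step_poly n m t%:C.
Proof. by rewrite /step_poly rmorphXn rmorphB rmorph1 rmorphXn. Qed.

Lemma step_poly_near_unit_interval {R : realType} n m {eta : R} : 0 < eta ->
  exists2 dl : R, 0 < dl & forall (z : R[i]) (t : R), 0 <= t <= 1 ->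
    `|z - t%:C| < dl%:C ->
    `|step_poly n.+1 m.+1 z - (step_poly n.+1 m.+1 t)%:C| <= eta%:C.
Proof.
move=> eta0; pose L : R := m.+1%:R * (1 + 2 ^+ n.+1) ^+ m * (n.+1%:R * 2 ^+ n).
have L0 : 0 <= L by rewrite !mulr_ge0 ?exprn_ge0 ?addr_ge0 ?exprn_ge0.
pose dl := Num.min 1 (eta / (L + 1)).
have dl0 : 0 < dl by rewrite lt_min ltr01 divr_gt0 //; lra.
have dl1 : dl <= 1 by rewrite ge_min lexx.
have Ldl : L * dl <= eta.
  have : dl <= eta / (L + 1) by rewrite ge_min lexx orbT.
  by rewrite ler_pdivlMr; [nra|lra].
exists dl => // z t /andP[t0 t1] zt; rewrite step_poly_real.
have realC1 : 1 = 1%:C :> R[i] by rewrite rmorph1.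
have realC2 : 2 = 2%:C :> R[i] by rewrite rmorph_nat.
have tC : `|t%:C| <= 2 by rewrite ger0_norm ?ler0c // realC2 lecR; lra.
have z2 : `|z| <= 2.
  rewrite -(subrK t%:C z); apply: le_trans (ler_normD _ _) _.
  rewrite -[2]/(1 + 1); apply: lerD; last by rewrite ger0_norm ?ler0c // realC1 lecR.
  by apply/ltW/(lt_le_trans zt); rewrite realC1 lecR.
apply: le_trans (step_poly_lipschitz n m z2 tC) _.
have -> : m.+1%:R * (1 + 2 ^+ n.+1) ^+ m * (n.+1%:R * 2 ^+ n) = L%:C :> R[i].
  by rewrite /L !rmorphM !rmorphXn rmorphD rmorph1 rmorphXn !rmorph_nat.
apply: le_trans (ler_wpM2l _ (ltW zt)) _; first by rewrite ler0c.
by rewrite -rmorphM lecR.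
Qed.

Section ComplexNorm.
Context {R : realType}.
Implicit Types (z : R[i]) (q e : R).

Lemma normCE z : (Normc.normc z)%:C = `|z|.
Proof. by case: z => a b; rewrite normc_def. Qed.

Lemma normc_near_real_le {z q e} : 0 <= q -> `|z - q%:C| <= e%:C ->
  Normc.normc z <= q + e.
Proof.
move=> q0 zq; rewrite -lecR normCE rmorphD -(subrK q%:C z).
apply: le_trans (ler_normD _ _) _; rewrite addrC lerD //.
by rewrite ger0_norm ?ler0c.
Qed.

Lemma ReB z w : complex.Re (z - w) = complex.Re z - complex.Re w.
Proof. by case: z; case: w. Qed.

Lemma normr_Re_lt {z e} : `|z| < e%:C -> `|complex.Re z| < e.
Proof. by rewrite -ltcR; apply: le_lt_trans (normc_ge_Re _). Qed.

Lemma Re_near_real {z q e} : `|z - q%:C| < e%:C -> q - e < complex.Re z < q + e.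
Proof. by move/normr_Re_lt; rewrite ReB /= -ltr_distlC distrC. Qed.

Lemma normc_ge0 z : 0 <= Normc.normc z.
Proof. by rewrite -ler0c normCE. Qed.

Lemma normc_combination_le z (q e1 e2 r M eta : R) :
  0 <= q <= 1 -> `|z - q%:C| <= eta%:C -> 0 <= e1 <= M -> 0 <= e2 <= M -> 0 <= r ->
  [\/ e1 <= r /\ e2 <= r, e1 <= r /\ 1 - eta <= q | e2 <= r /\ q <= eta] ->
  Normc.normc z * e1 + Normc.normc (1 - z) * e2 <= r + 2 * eta * (r + M).
Proof.
move=> /andP[q0 q1] zq /andP[e10 e1M] /andP[e20 e2M] r0 cases.
have eta0 : 0 <= eta by rewrite -ler0c (le_trans _ zq).
have al1 : Normc.normc z <= q + eta := normc_near_real_le q0 zq.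
have al2 : Normc.normc (1 - z) <= 1 - q + eta.
  apply: normc_near_real_le; first by rewrite subr_ge0.
  have -> : 1 - z - (1 - q)%:C = - (z - q%:C) by rewrite rmorphB rmorph1; ring.
  by rewrite normrN.
have n1 := normc_ge0 z; have n2 := normc_ge0 (1 - z).
have etaM : 0 <= eta * M by rewrite mulr_ge0 // (le_trans e10).
case: cases => [[e1r e2r]|[e1r qhi]|[e2r qlo]].
- have := ler_wpM2l n1 e1r; have := ler_wpM2l n2 e2r.
  have := ler_wpM2r r0 (lerD al1 al2); nra.
- have := ler_pM n1 e10 al1 e1r; have := ler_pM n2 e20 al2 e2M.
  have : (q + eta) * r <= (1 + eta) * r by apply: ler_wpM2r; lra.
  have : (1 - q + eta) * M <= (2 * eta) * M by apply: ler_wpM2r; lra.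
  nra.
- have := ler_pM n1 e10 al1 e1M; have := ler_pM n2 e20 al2 e2r.
  have : (q + eta) * M <= (2 * eta) * M by apply: ler_wpM2r; lra.
  have : (1 - q + eta) * r <= (1 + eta) * r by apply: ler_wpM2r; lra.
  nra.
Qed.

End ComplexNorm.

Lemma exists_margin {R : realFieldType} {r M Dr : R} : 0 <= r < Dr -> 0 <= M ->
  exists2 eta, 0 < eta & r + 2 * eta * (r + M) < Dr.
Proof.
move=> /andP[r0 rD] M0; exists ((Dr - r) / (4 * (r + M + 1))).
  by rewrite divr_gt0 ?mulr_gt0 ?subr_gt0 //; lra.
set eta := _ / _; have eta0 : 0 <= eta by rewrite divr_ge0 ?mulr_ge0 ?subr_ge0 //; lra.
have : eta * (4 * (r + M + 1)) = Dr - r by rewrite mulfVK // gt_eqF // mulr_gt0 //; lra.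
nra.
Qed.

Section Seminorm.
Context {R : realType} {X : lmodType R[i]} {p : X -> R} (hp : is_seminorm p).

Lemma seminormZ a x : p (a *: x) = Normc.normc a * p x.
Proof. by apply: complexI; case: hp => _ ->; rewrite -normCE rmorphM. Qed.

Lemma seminorm_ge0 x : 0 <= p x.
Proof.
have p0 : p 0 = 0 by rewrite -(scale0r 0) seminormZ Normc.normc0 mul0r.
have := hp.1 x (- x); rewrite -scaleN1r seminormZ normcN Normc.normc1 mul1r.
by rewrite scaleN1r subrr p0; lra.
Qed.

Lemma seminorm_combination_le a y1 y2 :
  p (a *: y1 + (1 - a) *: y2) <= Normc.normc a * p y1 + Normc.normc (1 - a) * p y2.
Proof. by rewrite -!seminormZ; apply: hp.1. Qed.

End Seminorm.

(** * Cluster values in the one-point compactification of C *)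

Definition cluster_opc {R : realType} {Omega : Type} (FF : set (set Omega))
    (S : set Omega) (phi : Omega -> R[i]) : set (one_point_compactification (R[i])^o) :=
  \bigcap_(F in FF) closure (@to_opc R @` (phi @` (F `&` S))).

Section ClusterOPC.
Context {R : realType} {Omega : Type}.
Variables (FF : set (set Omega)) (phi : Omega -> R[i]).
Hypotheses (FF_neq0 : FF !=set0)
  (FFI : forall F G, FF F -> FF G -> FF (F `&` G)).

Lemma cluster_opc_neq0 {S} : (forall F, FF F -> F `&` S !=set0) ->
  cluster_opc FF S phi !=set0.
Proof.
move=> FFS; pose B F := @to_opc R @` (phi @` (F `&` S)).
have Bfilter : Filter (filter_from FF B).
  apply: filter_from_filter => // F G FFF FFG; exists (F `&` G); first exact: FFI.
  by move=> _ [_ [x [[Fx Gx] Sx] <-] <-]; split; exists (phi x) => //; exists x.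
have : ProperFilter (filter_from FF B).
  apply: filter_from_proper => F /FFS[x Sx].
  by exists (to_opc (phi x)); exists (phi x) => //; exists x.
move=> /one_point_compactification_compact[|c [_ cl]].
  by case: FF_neq0 => F; exists F.
by exists c => F FFF N Nc; apply: cl => //; exists F.
Qed.

Lemma cluster_opc_near {S} {c : R[i]} {F} {e : R} :
  cluster_opc FF S phi (to_opc c) -> FF F -> 0 < e ->
  exists x, [/\ F x, S x & `|c - phi x| < e%:C].
Proof.
move=> clc FFF e0.
have ball_nbhs : nbhs (to_opc c) (Some @` ball (c : (R[i])^o) e%:C).
  by apply: one_point_compactification_some_nbhs; apply: nbhsx_ballx; rewrite ltcR.
have [_ [[_ [x [Fx Sx] <-] <-] [w cw [wx]]]] := clc F FFF _ ball_nbhs.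
by exists x; split => //; move: cw; rewrite wx -ball_normE /=; apply.
Qed.

Lemma cluster_opc_sub_near S (K : set R[i]) :
  (forall F, FF F -> F `&` S !=set0) ->
  cluster_opc FF S phi `<=` @to_opc R @` K ->
  forall e : R, 0 < e -> exists2 G, FF G &
    forall x, G x -> S x -> exists2 k, K k & `|phi x - k| < e%:C.
Proof.
move=> FFS clK e e0; apply: contrapT => noG.
pose Bad := [set x | ~ exists2 k, K k & `|phi x - k| < e%:C].
have FFBad F : FF F -> F `&` (S `&` Bad) !=set0.
  move=> FFF; apply: contrapT => /set0P/negP/negPn/eqP F0.
  apply: noG; exists F => // x Fx Sx.
  apply: contrapT => xBad; suff : (F `&` (S `&` Bad)) x by rewrite F0.
  by split; [|split].
have [c clc] := cluster_opc_neq0 FFBad.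
have [k Kk ck] : (@to_opc R @` K) c.
  apply: clK => F FFF; apply: closureS (clc F FFF).
  by move=> _ [_ [x [Fx [Sx _]] <-] <-]; exists (phi x) => //; exists x.
have [F0 FF0] := FF_neq0; rewrite -ck in clc.
have [x [_ [_ xBad] kx]] := cluster_opc_near clc FF0 e0.
by apply: xBad; exists k; rewrite // distrC.
Qed.

End ClusterOPC.

(** * Maximal z-filters *)

Definition zfilter_maximal_in (R : realType) {Omega : topologicalType}
    (Q FF : set (set Omega)) :=
  forall EE, is_zfilter R EE -> FF `<=` EE -> EE `<=` Q -> EE = FF.

Section MaximalZfilter.
Context {R : realType} {Omega : topologicalType}.
Local Notation Z := (@zero_sets R Omega).
Implicit Types (FF EE Q : set (set Omega)) (F : set Omega).

Lemma zfilterT {FF} : is_zfilter R FF -> FF setT.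
Proof. by case=> _ [F FFF] _ _ up; apply: up FFF zero_setsT _. Qed.

Lemma zfilter_bigcup (C : set (set (set Omega))) FF0 :
  C FF0 -> is_zfilter R FF0 -> (forall FF, C FF -> FF !=set0 -> is_zfilter R FF) ->
  total_on C subset -> is_zfilter R (\bigcup_(FF in C) FF).
Proof.
move=> CFF0 zFF0 zC tot.
have zmem FF F : C FF -> FF F -> is_zfilter R FF.
  by move=> CFF FFF; apply: zC => //; exists F.
split.
- by move=> F [FF CFF FFF]; case: (zmem _ _ CFF FFF) => + _ _ _ _; apply.
- by case: zFF0 => _ [F FF0F] _ _ _; exists F, FF0.
- by move=> [FF CFF FFset0]; case: (zmem _ _ CFF FFset0).
- move=> Z1 Z2 [FF1 CFF1 FFZ1] [FF2 CFF2 FFZ2].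
  have [FF12|FF21] := tot _ _ CFF1 CFF2.
  + exists FF2 => //; case: (zmem _ _ CFF2 FFZ2) => _ _ _ + _; apply => //.
    exact: FF12.
  + exists FF1 => //; case: (zmem _ _ CFF1 FFZ1) => _ _ _ + _; apply => //.
    exact: FF21.
- move=> Z1 Z2 [FF CFF FFZ1] ZZ2 Z12; exists FF => //.
  by case: (zmem _ _ CFF FFZ1) => _ _ _ _ up; exact: up FFZ1 ZZ2 Z12.
Qed.

Lemma exists_maximal_zfilter {Q B0} : is_zfilter R B0 -> B0 `<=` Q ->
  exists FF, [/\ is_zfilter R FF, B0 `<=` FF, FF `<=` Q & zfilter_maximal_in R Q FF].
Proof.
move=> zB0 B0Q.
(* Constraining only nonempty families lets the empty chain through Zorn_bigcup. *)
pose P FF := FF !=set0 -> [/\ is_zfilter R FF, B0 `<=` FF & FF `<=` Q].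
have [FF [PFF maxFF]] : exists FF, P FF /\ forall GG, FF `<` GG -> ~ P GG.
  apply: Zorn_bigcup => C CP tot [F [FF CFF FFF]].
  have zC GG : C GG -> GG !=set0 -> is_zfilter R GG by move=> /CP + GG0; case/(_ GG0).
  have [zFF B0FF FFQ] := CP _ CFF (ex_intro _ F FFF).
  split; first exact: zfilter_bigcup CFF zFF zC tot.
    by move=> B /B0FF FFB; exists FF.
  by move=> G [GG CGG GGG]; have [] := CP _ CGG (ex_intro _ G GGG); move=> _ _; apply.
have PB0 : P B0 by move=> _; split.
have FF_neq0 : FF !=set0.
  apply/set0P/eqP => FF0; apply: (maxFF B0) PB0; rewrite FF0; split => // B0_0.
  by case: zB0 => _ [F /B0_0 []].
have [zFF B0FF FFQ] := PFF FF_neq0.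
exists FF; split => // EE zEE FFEE EEQ; apply: contrapT => EEFF.
apply: (maxFF EE); first by split => // EEsub; apply: EEFF; apply/seteqP.
by move=> _; split => //; apply: subset_trans FFEE.
Qed.

Definition zfilter_adjoin FF Z0 : set (set Omega) :=
  [set E | Z E /\ exists2 F, FF F & F `&` Z0 `<=` E].

Section Adjoin.
Context {FF : set (set Omega)} {Z0 : set Omega}.
Hypotheses (zFF : is_zfilter R FF) (zZ0 : Z Z0)
  (meetZ0 : forall F, FF F -> F `&` Z0 !=set0).

Lemma zfilter_adjoinP : is_zfilter R (zfilter_adjoin FF Z0).
Proof.
have [_ _ _ FFI _] := zFF; split.
- by move=> E [].
- by exists setT; split; [exact: zero_setsT|exists setT => //; apply: zfilterT].
- by move=> [_ [F FFF FZ0]]; have [x Fx] := meetZ0 _ FFF; exact: FZ0 x Fx.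
- move=> E1 E2 [ZE1 [F1 FF1 sub1]] [ZE2 [F2 FF2 sub2]]; split; first exact: zero_setsI.
  exists (F1 `&` F2); first exact: FFI.
  by move=> x [[F1x F2x] Z0x]; split; [apply: sub1|apply: sub2].
- by move=> E E' [_ [F FFF sub]] ZE' EE'; split => //; exists F => // x /sub/EE'.
Qed.

Lemma sub_zfilter_adjoin : FF `<=` zfilter_adjoin FF Z0.
Proof. by move=> F FFF; split; [case: zFF => + _ _ _ _; apply|exists F => // x []]. Qed.

Lemma zfilter_adjoin_mem : zfilter_adjoin FF Z0 Z0.
Proof. by split => //; exists setT; [exact: zfilterT|move=> x []]. Qed.

Lemma maximal_zfilter_adjoin {Q} : (forall F G, F `<=` G -> Q F -> Q G) ->
  zfilter_maximal_in R Q FF -> ~ FF Z0 -> exists2 F, FF F & ~ Q (F `&` Z0).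
Proof.
move=> Qup maxFF nFFZ0; apply: contrapT => noF; apply: nFFZ0.
suff <- : zfilter_adjoin FF Z0 = FF by exact: zfilter_adjoin_mem.
apply: maxFF; [exact: zfilter_adjoinP|exact: sub_zfilter_adjoin|].
move=> E [_ [F FFF FZ0E]]; apply: Qup FZ0E _.
by apply: contrapT => nQ; apply: noF; exists F.
Qed.

End Adjoin.
End MaximalZfilter.

Definition zfilter_at (R : realType) {Omega : topologicalType} (x0 : Omega) :
    set (set Omega) :=
  [set Z | zero_sets R Z /\ Z x0].

Section ZfilterAt.
Context {R : realType} {Omega : topologicalType} (x0 : Omega).

Lemma zfilter_atP : is_zfilter R (zfilter_at R x0).
Proof.
split.
- by move=> Z [].
- by exists setT; split => //; exact: zero_setsT.
- by case.
- by move=> Z1 Z2 [ZZ1 Z1x0] [ZZ2 Z2x0]; split; [exact: zero_setsI|].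
- by move=> Z1 Z2 [_ Z1x0] ZZ2 /(_ _ Z1x0).
Qed.

Lemma zfilter_at_mem FF : is_zfilter R FF -> zfilter_at R x0 `<=` FF ->
  forall F, FF F -> F x0.
Proof.
move=> [sub _ FFn0 FFI _] x0FF F FFF; apply: contrapT => nFx0.
have [h ch hF] := sub F FFF.
have x0FFh : FF [set x | h x = h x0].
  by apply: x0FF; split => //; exact: zero_sets_eq.
apply: FFn0; suff <- : F `&` [set x | h x = h x0] = set0 by exact: FFI.
apply/seteqP; split => // x [Fx /= hx]; apply: nFx0.
by move: Fx; rewrite -hF /= hx.
Qed.

End ZfilterAt.

Lemma continuous_Re {R : realType} {Omega : topologicalType} (phi : Omega -> R[i]) :
  continuousC phi -> continuous (fun x => complex.Re (phi x)).
Proof.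
move=> cphi x; apply/cvgrPdist_lt => e e0.
have := (cvgrPdist_lt _ _).1 (cphi x) e%:C; rewrite ltcR => /(_ _ e0).
by apply: filterS => y /normr_Re_lt; rewrite ReB.
Qed.

(** * Maximal distance-preserving z-filters are antisymmetric *)

Lemma mem_supp {R : realType} {Omega : topologicalType} {v : Omega -> R} {x} :
  v x != 0 -> supp v x.
Proof. exact: (subset_closure (A := [set y | v y != 0])). Qed.

Definition adherent_value {R : realType} {Omega : Type} (FF : set (set Omega))
    (k : Omega -> R) (c : R) :=
  forall F (e : R), FF F -> 0 < e -> exists2 x, F x & `|k x - c| < e.

Lemma adherent_valueN {R : realType} {Omega : Type} (FF : set (set Omega)) k (c : R) :
  adherent_value FF k c -> adherent_value FF (fun x => - k x) (- c).
Proof.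
move=> adh F e FFF e0; have [x Fx kx] := adh F e FFF e0.
by exists x => //; rewrite -opprD normrN.
Qed.

Lemma cluster_opc_adherent_Re {R : realType} {Omega : Type} {FF : set (set Omega)} {S}
    {phi : Omega -> R[i]} {c : R} :
  cluster_opc FF S phi (to_opc c%:C) ->
  adherent_value FF (fun x => complex.Re (phi x)) c.
Proof.
move=> clc F e FFF e0; have [x [Fx _ cx]] := cluster_opc_near FF phi clc FFF e0.
by exists x => //; rewrite ltr_distl; apply: Re_near_real; rewrite distrC.
Qed.

(* The reverse inequality always holds, so these are the F with d_F(f, W) = d(f, W). *)
Definition wdist_full {R : realType} {Omega : Type} {X : lmodType R[i]}
    (v : Omega -> R) (p : X -> R) (f : Omega -> X) (W : set (Omega -> X)) :
    set (set Omega) :=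
  [set F | (wdist v p setT f W <= wdist v p F f W)%E].

Section WdistFull.
Context {R : realType} {Omega : topologicalType} {X : lmodType R[i]}.
Context {p : X -> R} {v : Omega -> R} {W : set (Omega -> X)} {f : Omega -> X}.
Hypotheses (hp : is_seminorm p) (v_ge0 : forall x, 0 <= v x)
  (f_bounded : forall g, W g -> exists M, forall x, v x * p (f x - g x) <= M).

Local Notation d F := (wdist v p F f W).
Local Notation D := (wdist v p setT f W).
Local Notation full := (wdist_full v p f W).

Lemma wdist_full_up F G : F `<=` G -> full F -> full G.
Proof. by move=> FG /le_trans; apply; apply: le_wdist. Qed.

Lemma wdist_fin {g} : W g -> exists Dr : R, D = Dr%:E.
Proof.
move=> Wg; have [M HM] := f_bounded _ Wg.
have : (D <= (Num.max M 0)%:E)%E.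
  apply: le_trans (wdist_le_wsnorm v p Wg) _.
  by apply: ge_wsnorm => [|x _]; rewrite le_max ?lexx ?orbT ?HM.
by have := wdist_ge0 v p setT f W; case: D => [r _ _|//|//]; exists r.
Qed.

Lemma lt_wdist_fin {F} : (d F < D)%E -> exists Dr : R, D = Dr%:E.
Proof. by move=> /ereal_inf_lt[_ [g Wg _] _]; exact: wdist_fin Wg. Qed.

Lemma combination_err_le (z : R[i]) g1 g2 x :
  v x * p (f x - (z *: g1 x + (1 - z) *: g2 x)) <=
    Normc.normc z * (v x * p (f x - g1 x)) + Normc.normc (1 - z) * (v x * p (f x - g2 x)).
Proof.
have -> : f x - (z *: g1 x + (1 - z) *: g2 x) = z *: (f x - g1 x) + (1 - z) *: (f x - g2 x).
  by rewrite !scalerBr addrACA -scalerDl subrKC scale1r opprD.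
apply: le_trans (ler_wpM2l (v_ge0 x) (seminorm_combination_le hp _ _ _)) _.
by rewrite mulrDr ![v x * (_ * _)]mulrCA.
Qed.

Section Maximal.
Context {FF : set (set Omega)}.
Hypotheses (zFF : is_zfilter R FF) (FF_full : FF `<=` full)
  (maxFF : zfilter_maximal_in R full FF)
  (meetFF : forall F, FF F -> F `&` supp v !=set0).

Lemma lt_wdist_sublevel {k : Omega -> R} {a t b} : continuous k -> a < t -> t < b ->
  adherent_value FF k a -> adherent_value FF k b ->
  exists2 F, FF F & (d (F `&` [set x | (k x <= t)%R]) < D)%E.
Proof.
move=> ck at_ tb adha adhb.
have meet_level F : FF F -> F `&` [set x | k x <= t] !=set0.
  move=> FFF; have [|x Fx] := adha F (t - a) FFF; first by rewrite subr_gt0.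
  by rewrite ltr_distl => /andP[_ kx]; exists x; split => //=; lra.
have notFF_level : ~ FF [set x | k x <= t].
  move=> FFt; have [|x /= kxt] := adhb _ (b - t) FFt; first by rewrite subr_gt0.
  by rewrite ltr_distl => /andP[kx _]; lra.
have [F FFF Fnfull] := maximal_zfilter_adjoin zFF (zero_sets_le _ t ck) meet_level
  wdist_full_up maxFF notFF_level.
by exists F => //; rewrite ltNge; apply/negP.
Qed.

Lemma lt_wdist_superlevel {k : Omega -> R} {a t b} : continuous k -> a < t -> t < b ->
  adherent_value FF k a -> adherent_value FF k b ->
  exists2 F, FF F & (d (F `&` [set x | (t <= k x)%R]) < D)%E.
Proof.
move=> ck at_ tb /adherent_valueN adha /adherent_valueN adhb.
have ck' : continuous (fun x => - k x) by move=> x; exact: continuousN (ck x).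
have tb' : - b < - t by rewrite ltrN2.
have at' : - t < - a by rewrite ltrN2.
have [F FFF dF] := lt_wdist_sublevel ck' tb' at' adhb adha.
exists F => //; suff -> : [set x | t <= k x] = [set x | - k x <= - t] by [].
by apply/seteqP; split => x /=; rewrite lerN2.
Qed.

Lemma exists_level_approximants {k : Omega -> R} {a t1 t2 b} : continuous k ->
  a < t1 -> t1 < t2 -> t2 < b -> adherent_value FF k a -> adherent_value FF k b ->
  exists Dr F g1 g2 r M, [/\ D = Dr%:E, 0 <= r < Dr, 0 <= M, [/\ FF F, W g1 & W g2] &
    forall x, F x -> [/\ k x <= t2 -> v x * p (f x - g1 x) <= r,
                        t1 <= k x -> v x * p (f x - g2 x) <= r,
                        v x * p (f x - g1 x) <= M & v x * p (f x - g2 x) <= M]].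
Proof.
move=> ck at1 t12 t2b adha adhb.
have [F1 FF1 dF1] := lt_wdist_sublevel ck (lt_trans at1 t12) t2b adha adhb.
have [F2 FF2 dF2] := lt_wdist_superlevel ck at1 (lt_trans t12 t2b) adha adhb.
have [Dr DE] := lt_wdist_fin dF1; rewrite DE in dF1 dF2.
have [g1 [r1 [Wg1 /andP[r10 r1D] g1r]]] := wdist_lt_witness v p dF1.
have [g2 [r2 [Wg2 /andP[r20 r2D] g2r]]] := wdist_lt_witness v p dF2.
have [M1 g1M] := f_bounded _ Wg1; have [M2 g2M] := f_bounded _ Wg2.
exists Dr, (F1 `&` F2), g1, g2, (Num.max r1 r2), (Num.max (Num.max M1 M2) 0).
split => //.
- by rewrite le_max r10 gt_max r1D r2D.
- by rewrite le_max lexx orbT.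
- by split => //; case: zFF => _ _ _ + _; apply.
move=> x [F1x F2x]; split.
- by move=> kx; rewrite le_max g1r.
- by move=> kx; rewrite le_max g2r ?orbT.
- by rewrite !le_max g1M.
- by rewrite !le_max g2M ?orbT.
Qed.

Lemma glued_approximant_lt_wdist {phi : Omega -> R[i]} {F g1 g2} {Dr r M t1 t2 d0 : R} :
  is_multiplier W phi ->
  (forall dl : R, 0 < dl -> exists2 G, FF G & forall x, G x -> supp v x ->
     exists2 z, [set t%:C | t in [set t : R | 0 <= t <= 1]] z & `|phi x - z| < dl%:C) ->
  D = Dr%:E -> 0 <= r < Dr -> 0 <= M ->
  0 < d0 -> 0 < t1 + d0 -> t1 + d0 < t2 - d0 -> t2 - d0 <= 1 ->
  FF F -> W g1 -> W g2 ->
  (forall x, F x -> [/\ complex.Re (phi x) <= t2 -> v x * p (f x - g1 x) <= r,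
                      t1 <= complex.Re (phi x) -> v x * p (f x - g2 x) <= r,
                      v x * p (f x - g1 x) <= M & v x * p (f x - g2 x) <= M]) ->
  exists2 G, FF G & (d G < D)%E.
Proof.
move=> Mphi phi_near DE rD M0 d00 s10 s12 s21 FFF Wg1 Wg2 bnd.
have [eta eta0 etaD] := exists_margin rD M0; have /andP[r0 _] := rD.
pose s := r + 2 * eta * (r + M); have s0 : 0 <= s by rewrite /s; have := ltW eta0; nra.
have [n [m [q_hi q_lo]]] := step_poly_separates s10 s12 s21 eta0.
have [dl dl0 psi_near] := step_poly_near_unit_interval n m eta0.
have [|G FFG G_near] := phi_near (Num.min dl d0); first by rewrite lt_min dl0.
pose psi x := step_poly n.+1 m.+1 (phi x).
have Wh : W (fun x => psi x *: g1 x + (1 - psi x) *: g2 x).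
  exact: multiplier_step_poly Mphi _ _ Wg1 Wg2.
exists (G `&` F); first by case: zFF => _ _ _ + _; apply.
rewrite DE; apply: le_lt_trans (wdist_le_wsnorm v p Wh) _.
apply: le_lt_trans (ge_wsnorm v p _ _ s s0 _) _; last by rewrite lte_fin.
move=> x [Gx Fx]; have [vx0|vx_neq0] := eqVneq (v x) 0; first by rewrite vx0 mul0r.
have [_ [t t01 <-] phit] := G_near x Gx (mem_supp vx_neq0).
have [e1r e2r e1M e2M] := bnd x Fx.
have e10 : 0 <= v x * p (f x - g1 x) by rewrite mulr_ge0 ?(seminorm_ge0 hp).
have e20 : 0 <= v x * p (f x - g2 x) by rewrite mulr_ge0 ?(seminorm_ge0 hp).
apply: le_trans (combination_err_le _ _ _ _) _.
apply: (normc_combination_le _ (step_poly n.+1 m.+1 t)); rewrite ?e10 ?e20 //.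
- exact: step_poly_ge0_le1.
- by apply: psi_near => //; apply: lt_le_trans phit _; rewrite lecR ge_min lexx.
have /andP[tlo thi] := Re_near_real phit.
have dld0 : Num.min dl d0 <= d0 by rewrite ge_min lexx orbT.
have [Re_lo|Re_ge] := ltrP (complex.Re (phi x)) t1.
  apply: Or32; split; first by apply: e1r; lra.
  by apply: q_hi; case/andP: t01 => -> _ /=; lra.
have [Re_hi|Re_le] := ltrP t2 (complex.Re (phi x)).
  apply: Or33; split; first by apply: e2r; lra.
  by apply: q_lo; case/andP: t01 => _ ->; rewrite andbT; lra.
by apply: Or31; split; [apply: e1r|apply: e2r].
Qed.

Lemma cluster_opc_real_eq {phi : Omega -> R[i]} :
  continuousC phi -> is_multiplier W phi ->
  cluster_opc FF (supp v) phi `<=` [set to_opc r%:C | r in [set r : R | 0 <= r <= 1]] ->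
  forall a b : R, 0 <= a <= 1 -> 0 <= b <= 1 ->
  cluster_opc FF (supp v) phi (to_opc a%:C) ->
  cluster_opc FF (supp v) phi (to_opc b%:C) -> a = b.
Proof.
move=> cphi Mphi clI a b.
wlog ab : a b / a < b.
  move=> H a01 b01 ca cb; have [ab|ba|//] := ltgtP a b; first exact: H.
  by apply/esym/H.
move=> /andP[a0 _] /andP[_ b1] ca cb; exfalso.
have [_ FF_neq0 _ FFI _] := zFF.
have phi_near dl : 0 < dl -> exists2 G, FF G & forall x, G x -> supp v x ->
    exists2 z, [set t%:C | t in [set t : R | 0 <= t <= 1]] z & `|phi x - z| < dl%:C.
  apply: (cluster_opc_sub_near FF phi FF_neq0 FFI (supp v) _ meetFF).
  by rewrite image_comp.
(* Cut at a + d0 < b - d0 to get approximants; let the step switch in between. *)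
pose d0 := (b - a) / 5; have d00 : 0 < d0 by rewrite divr_gt0 ?subr_gt0.
have d0E : b - a = 5 * d0 by rewrite /d0 mulrC divfK.
have t1a : a < a + d0 by lra.
have t12 : a + d0 < b - d0 by lra.
have t2b : b - d0 < b by lra.
have [Dr [F [g1 [g2 [r [M [DE rD M0 [FFF Wg1 Wg2] bnd]]]]]]] :=
  exists_level_approximants (continuous_Re _ cphi) t1a t12 t2b
    (cluster_opc_adherent_Re ca) (cluster_opc_adherent_Re cb).
have s10 : 0 < a + d0 + d0 by lra.
have s12 : a + d0 + d0 < b - d0 - d0 by lra.
have s21 : b - d0 - d0 <= 1 by lra.
have [G FFG dG] :=
  glued_approximant_lt_wdist Mphi phi_near DE rD M0 d00 s10 s12 s21 FFF Wg1 Wg2 bnd.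
by have := FF_full _ FFG; rewrite /wdist_full /= leNgt dG.
Qed.

Lemma maximal_zfilter_antisymmetric (A : set (Omega -> R[i])) :
  (forall phi, A phi -> continuousC phi) -> (forall phi, A phi -> is_multiplier W phi) ->
  Av_antisymmetric A v FF.
Proof.
move=> Acont Amult; split => // phi Aphi I clI.
have [_ FF_neq0 _ FFI _] := zFF.
have [c0 cl0] := cluster_opc_neq0 FF phi FF_neq0 FFI meetFF.
exists c0; apply/seteqP; split => [c clc|_ ->] //.
have [a a01 ac] := clI c clc; have [b b01 bc] := clI c0 cl0.
rewrite -ac -bc in clc cl0 *.
by rewrite (cluster_opc_real_eq (Acont _ Aphi) (Amult _ Aphi) clI _ _ a01 b01 clc cl0).
Qed.

End Maximal.

Lemma wdist_full_all : D = 0%E \/ D = +oo%E -> forall F, full F.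
Proof.
case=> [D0|Doo] F; rewrite /wdist_full /= ?D0 ?wdist_ge0 // Doo.
suff -> : W = set0 by rewrite wdist_set0.
apply/seteqP; split => // g Wg; have [Dr] := wdist_fin Wg.
by rewrite Doo.
Qed.

Lemma wdist_off_supp {F g} : W g -> F `&` supp v = set0 -> d F = 0%E.
Proof.
move=> Wg Fsupp; apply/le_anti; rewrite wdist_ge0 andbT.
apply: le_trans (wdist_le_wsnorm v p Wg) _; apply: ge_wsnorm => // x Fx.
have [vx0|vx_neq0] := eqVneq (v x) 0; first by rewrite vx0 mul0r.
suff : (F `&` supp v) x by rewrite Fsupp.
by split => //; apply: mem_supp.
Qed.

Lemma exists_base_zfilter : (exists x, v x != 0) ->
  exists B0, [/\ is_zfilter R B0, B0 `<=` full &
    forall FF, is_zfilter R FF -> B0 `<=` FF -> FF `<=` full ->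
      forall F, FF F -> F `&` supp v !=set0].
Proof.
move=> [x0 vx0_neq0]; have [D0oo|D_fin] := pselect (D = 0%E \/ D = +oo%E).
  exists (zfilter_at R x0); split => [||FF zFF x0FF _ F FFF].
  - exact: zfilter_atP.
  - by move=> F _; apply: wdist_full_all.
  - exists x0; split; first exact: zfilter_at_mem zFF x0FF F FFF.
    exact: mem_supp.
exists [set setT]; split => [||FF zFF _ FF_full F FFF].
- split => [_ ->|||_ _ -> ->|_ Z -> _ TZ]; rewrite ?setTI //.
  + exact: zero_setsT.
  + by exists setT.
  + by move=> T0; have : (@setT Omega) x0 by []; rewrite -T0.
  + by apply/seteqP; split => // x _; apply: TZ.
- by move=> _ ->; rewrite /wdist_full /=.
have [g Wg] : W !=set0.
  by apply/set0P/negP => /eqP W0; apply: D_fin; right; rewrite W0 wdist_set0.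
apply/set0P/negP => /eqP Fsupp; apply: D_fin; left.
by apply/le_anti; rewrite wdist_ge0 andbT -(wdist_off_supp Wg Fsupp); apply: FF_full.
Qed.

End WdistFull.

Lemma ereal_inf_wdist_zfilter {R : realType} {Omega : topologicalType}
    {X : lmodType R[i]} {v : Omega -> R} {p : X -> R} {f : Omega -> X}
    {W : set (Omega -> X)} {FF : set (set Omega)} :
  is_zfilter R FF ->
  ereal_inf [set wdist v p F f W | F in FF] = wdist v p setT f W <->
  FF `<=` wdist_full v p f W.
Proof.
move=> zFF; split => [infE F FFF|FF_full].
  by rewrite /wdist_full /= -infE; apply: ereal_inf_lbound; exists F.
apply/le_anti/andP; split.
  by apply: ereal_inf_lbound; exists setT => //; exact: zfilterT zFF.
by apply: le_ereal_inf_tmp => _ [F FFF <-]; exact: FF_full.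
Qed.

Lemma FVb_bounded {R : realType} {Omega : Type} {X : lmodType R[i]}
    (V : set (Omega -> R)) (AA : set (X -> R)) (h : Omega -> X) v p :
  FVb V AA h -> V v -> AA p -> exists M, forall x, v x * p (h x) <= M.
Proof.
move=> /(_ v p) + Vv Ap => /(_ Vv Ap).
have ub x : ((v x * p (h x))%:E <= ereal_sup [set (v x * p (h x))%:E | x in setT])%E.
  by apply: ereal_sup_ubound; exists x.
case: ereal_sup ub => [M|//|] ub _; first by exists M => x; rewrite -lee_fin ub.
by exists 0 => x; have := ub x.
Qed.

Theorem theorem2p7 (R : realType) (Omega : topologicalType)
  (X : lmodType R[i]) (AA : set (X -> R))
  (V : set (Omega -> R)) (A : set (Omega -> R[i]))
  (W : set (Omega -> X)) (f : Omega -> X) :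
  (forall p, AA p -> is_seminorm p) ->
  (forall v, V v -> forall x, 0 <= v x) ->
  (forall phi, A phi -> continuousC phi) ->
  (forall phi, A phi -> is_multiplier W phi) ->
  (forall g, W g -> FVb V AA (fun x => f x - g x)) ->
  forall p v, AA p -> V v ->
  (exists x, v x != 0) ->
  exists FF : set (set Omega),
    [/\ is_zfilter R FF,
        Av_antisymmetric A v FF,
        ereal_inf [set wdist v p F f W | F in FF] = wdist v p [set: Omega] f W &
        forall EE : set (set Omega), is_zfilter R EE -> FF `<=` EE ->
          ereal_inf [set wdist v p E f W | E in EE] = wdist v p [set: Omega] f W ->
          EE = FF].
Proof.
move=> seminormAA V_ge0 A_cont A_mult fW_FVb p v AAp Vv v_neq0.
have hp := seminormAA _ AAp; have v_ge0 := V_ge0 _ Vv.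
have f_bounded g : W g -> exists M, forall x, v x * p (f x - g x) <= M.
  by move=> Wg; exact: FVb_bounded (fW_FVb _ Wg) Vv AAp.
have [B0 [zB0 B0_full B0_meet]] := exists_base_zfilter f_bounded v_neq0.
have [FF [zFF B0FF FF_full maxFF]] := exists_maximal_zfilter zB0 B0_full.
have meetFF := B0_meet FF zFF B0FF FF_full.
exists FF; split => //.
- exact: (maximal_zfilter_antisymmetric hp v_ge0 f_bounded zFF FF_full maxFF meetFF
    A A_cont A_mult).
- exact/(ereal_inf_wdist_zfilter zFF).
- by move=> EE zEE FFEE /(ereal_inf_wdist_zfilter zEE) EE_full; apply: maxFF.
Qed.
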